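(* For $\epsilon,\delta\ge 0$ and a set $X$, let $\mathsf{DPR}(\epsilon,\delta)(X)$ be the set $D X$ with the relation $\mu\sim\nu$ iff for all $S\subseteq X$, $\mu(S)\le e^{\epsilon}\nu(S)+\delta$ and $\nu(S)\le e^{\epsilon}\mu(S)+\delta$. Then $\mathsf{DPR}$, viewed as a map $\mathbb{R}_{\ge0}\times\mathbb{R}_{\ge0}\to\mathbf{Ord}(q,D)$, is an $(\mathbb{R}^+_{\ge0}\times\mathbb{R}^+_{\ge0})$-graded $\times$-parameterized assignment of $\mathsf{RSRel}$ on the distribution monad $\mathcal{D}$. Concretely: $\mathsf{DPR}$ is monotone (if $\epsilon\le\epsilon'$, $\delta\le\delta'$ then $\mu\sim_{\mathsf{DPR}(\epsilon,\delta)(X)}\nu$ implies $\mu\sim_{\mathsf{DPR}(\epsilon',\delta')(X)}\nu$), and for all sets $X,Y$, all $\epsilon,\delta,\epsilon',\delta'\ge0$, all $f,g:X\to D Y$ with $f(x)\sim_{\mathsf{DPR}(\epsilon',\delta')(Y)}g(x)$ for every $x\in X$, and all $\mu\sim_{\mathsf{DPR}(\epsilon,\delta)(X)}\nu$, we have $f^\dagger(\mu)\sim_{\mathsf{DPR}(\epsilon+\epsilon',\delta+\delta')(Y)}g^\dagger(\nu)$.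
   Context: $D X$ is the set of discrete probability distributions on $X$ (functions $\mu:X\to[0,1]$ with countable support summing to $1$), $\mu(S)=\sum_{x\in S}\mu(x)$, and for $f:X\to D Y$, $f^\dagger(\mu)(y)=\sum_x f(x)(y)\mu(x)$. $\mathsf{RSRel}$ is the category whose objects are sets with a reflexive symmetric relation and whose morphisms are relation-preserving functions; $q:\mathsf{RSRel}\to\mathsf{Set}$ is the forgetful functor. $\mathbf{Ord}(q,D)$ is the class of maps assigning to each set $X$ a reflexive symmetric relation on $D X$. $\mathbb{R}^+_{\ge0}$ is the additive monoid of nonnegative reals with the usual order, and the product monoid is ordered componentwise. In $\mathsf{RSRel}$ (with product $(x,y)\sim(x',y')$ iff $x\sim x'$ and $y\sim y'$), for a set $X$ and object $Z$, $X\dot\pitchfork Z$ is the set of functions $X\to|Z|$ with $h\sim h'$ iff $h(x)\sim h'(x)$ for all $x$; a graded $\times$-parameterized assignment $\Delta$ requires that $(h,\mu)\mapsto h^\dagger(\mu)$ be relation-preserving $(X\dot\pitchfork\Delta\alpha Y)\times\Delta\beta X\to\Delta(\beta\cdot\alpha)Y$ for all grades, with $\Delta$ monotone in the grade. *)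

From mathcomp Require Import all_boot all_order all_algebra.
From mathcomp Require Import all_classical all_reals all_analysis.
Set Implicit Arguments. Unset Strict Implicit. Unset Printing Implicit Defensive.
Import Order.TTheory GRing.Theory Num.Theory.
Local Open Scope classical_set_scope.
Local Open Scope ring_scope.

Definition mass (R : realType) (X : Type) (mu : X -> R) (S : set X) : \bar R :=
  esum (S : set {classic X}) (fun x => (mu x)%:E).

Definition is_distr (R : realType) (X : Type) (mu : X -> R) : Prop :=
  (forall x, 0 <= mu x <= 1) /\
  countable [set x | mu x != 0] /\
  mass mu setT = 1%E.

Definition kbind (R : realType) (X Y : Type) (f : X -> Y -> R) (mu : X -> R)
  : Y -> R :=
  fun y => fine (esum (setT : set {classic X}) (fun x => (f x y * mu x)%:E)).

Definition DPR (R : realType) (eps delta : R) (X : Type) (mu nu : X -> R) : Prop :=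
  forall S : set X,
    (mass mu S <= (expR eps)%:E * mass nu S + delta%:E)%E /\
    (mass nu S <= (expR eps)%:E * mass mu S + delta%:E)%E.

From mathcomp Require Import all_boot all_order all_algebra.
From mathcomp Require Import all_classical all_reals all_analysis.
From mathcomp Require Import ring lra.
Set Implicit Arguments.
Unset Strict Implicit.
Unset Printing Implicit Defensive.

Import Order.TTheory GRing.Theory Num.Theory.
Local Open Scope ring_scope.

(* By Tonelli, [f^dagger mu (S)] is the mu-average of [x |-> f x (S)], and the
   bound on [f x] gives [f x (S) <= h x + delta'] with
   [h x = min(1, e^eps' g x (S))] in [0,1].  The set-wise bound
   [mu(S) <= e^eps nu(S) + delta] extends to [0,1]-valued test functions:
   pointwise [mu h <= e^eps nu h + (mu - e^eps nu)^+], and the positive part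
   sums to [mu(P) - e^eps nu(P) <= delta] over the set [P] where it is nonzero.
   Finally [h x <= e^eps' g x (S)] bounds the nu-average of [h] by
   [e^eps' g^dagger nu (S)]. *)

Definition dp_bound (R : realType) (eps delta : R) (X : Type) (mu nu : X -> R) :=
  forall S : set X, (mass mu S <= (expR eps)%:E * mass nu S + delta%:E)%E.

Lemma DPRE (R : realType) (eps delta : R) (X : Type) (mu nu : X -> R) :
  DPR eps delta mu nu <-> dp_bound eps delta mu nu /\ dp_bound eps delta nu mu.
Proof.
split=> [DPmn | [mn nm] S]; last by split.
by split=> S; have [] := DPmn S.
Qed.

Section esum_lemmas.
Variable R : realType.
Local Open Scope classical_set_scope.
Local Open Scope ereal_scope.

Lemma esumZl (T : choiceType) (S : set T) (a : T -> \bar R) (c : R) :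
  (0 <= c)%R -> (forall i, S i -> 0 <= a i) ->
  esum S (fun i => c%:E * a i) = c%:E * esum S a.
Proof.
move=> c0 a0; rewrite /esum -ereal_supZl //; last first.
  by apply/set0P; exists 0; exists set0; [exact: fsets_set0|rewrite fsbig_set0].
have sumZ A : fsets S A -> \sum_(i \in A) c%:E * a i = c%:E * \sum_(i \in A) a i.
  move=> [finA AS]; rewrite !fsbig_finite// big_seq [in RHS]big_seq.
  by rewrite ge0_sume_distrr// => i; rewrite in_fset_set// inE => /AS /a0.
congr ereal_sup; apply/seteqP; split => x.
- by move=> [A SA <-]; exists (\sum_(i \in A) a i); [exists A | rewrite sumZ].
- by move=> [_ [A SA <-] <-]; exists A; rewrite ?sumZ.
Qed.

Lemma esum_le_setT (T : choiceType) (S : set T) (a : T -> \bar R) :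
  (forall i, 0 <= a i) -> esum S a <= esum setT a.
Proof. by move=> a0; rewrite esum_mkcond; apply: le_esum => i _; case: ifP. Qed.

Lemma ge0_le_fin_num (x y : \bar R) :
  0 <= x -> x <= y -> y \is a fin_num -> x \is a fin_num.
Proof.
move=> x0 le_xy; rewrite !ge0_fin_numE ?(le_trans x0 le_xy) //.
exact: le_lt_trans.
Qed.

Lemma esum_swap (T1 T2 : choiceType) (A : set T1) (B : set T2)
    (a : T1 -> T2 -> \bar R) : (forall i j, 0 <= a i j) ->
  esum A (fun i => esum B (a i)) = esum B (fun j => esum A (a^~ j)).
Proof.
move=> a0; rewrite (esum_esum (J := fun=> B)) // (esum_esum (J := fun=> A)) //.
rewrite (reindex_esum (B `*`` fun=> A) _ (fun k : T2 * T1 => (k.2, k.1))) //.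
split.
- by move=> [j i] [/= Bj Ai].
- by move=> [j i] [j' i'] _ _ [-> ->].
- by move=> [i j] [/= Ai Bj]; exists (j, i).
Qed.

Lemma esum_excess_le (T : choiceType) (P : set T) (mu nu : T -> R) (c d : R) :
  (0 <= c)%R -> (forall x, 0 <= nu x)%R -> (forall x, P x -> c * nu x <= mu x)%R ->
  esum P (fun x => (nu x)%:E) \is a fin_num ->
  esum P (fun x => (mu x)%:E) <= c%:E * esum P (fun x => (nu x)%:E) + d%:E ->
  esum P (fun x => (mu x - c * nu x)%:E) <= d%:E.
Proof.
move=> c0 nu0 le_mu nuP_fin.
have -> : esum P (fun x => (mu x)%:E) =
    c%:E * esum P (fun x => (nu x)%:E) + esum P (fun x => (mu x - c * nu x)%:E).
  rewrite -esumZl //; last by move=> x _; rewrite lee_fin.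
  rewrite -esumD; last 2 first.
  - by move=> x _; rewrite lee_fin mulr_ge0.
  - by move=> x /le_mu; rewrite lee_fin subr_ge0.
  by apply: eq_esum => x _; rewrite -EFinM -EFinD subrKC.
by rewrite leeD2lE // fin_numM.
Qed.

Lemma esum_weighted_le (T : choiceType) (mu nu h : T -> R) (c d : R) :
  (0 <= c)%R -> (forall x, 0 <= mu x)%R -> (forall x, 0 <= nu x)%R ->
  (forall x, 0 <= h x <= 1)%R ->
  esum setT (fun x => (nu x)%:E) \is a fin_num ->
  (forall S, esum S (fun x => (mu x)%:E) <=
               c%:E * esum S (fun x => (nu x)%:E) + d%:E) ->
  esum setT (fun x => (mu x * h x)%:E) <=
    c%:E * esum setT (fun x => (nu x * h x)%:E) + d%:E.
Proof.
move=> c0 mu0 nu0 h01 nu_fin mu_le.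
pose P := [set x | c * nu x < mu x]%R.
pose excess x := if x \in P then (mu x - c * nu x)%:E else 0.
have excess0 x : 0 <= excess x.
  by rewrite /excess; case: ifPn => // /set_mem Px; rewrite lee_fin subr_ge0 ltW.
have nuP_fin : esum P (fun x => (nu x)%:E) \is a fin_num.
  apply: ge0_le_fin_num nu_fin; first by apply: esum_ge0 => x _; rewrite lee_fin.
  by apply: esum_le_setT => x; rewrite lee_fin.
have h0 x : (0 <= h x)%R by case/andP: (h01 x).
have nuh0 x : (0 <= nu x * h x)%R by rewrite mulr_ge0.
have nuh_fin : esum setT (fun x => (nu x * h x)%:E) \is a fin_num.
  apply: ge0_le_fin_num nu_fin; first by apply: esum_ge0 => x _; rewrite lee_fin.
  by apply: le_esum => x _; rewrite lee_fin ler_piMr //; case/andP: (h01 x).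
have pointwise x : (mu x * h x)%:E <= c%:E * (nu x * h x)%:E + excess x.
  have /andP[h0x h1x] := h01 x; rewrite /excess -EFinM.
  case: ifPn; rewrite /P ?inE ?notin_setE /= => Px.
    by rewrite -EFinD lee_fin; nra.
  by move/negP: Px; rewrite -leNgt adde0 lee_fin; nra.
have excess_le : esum setT excess <= d%:E.
  by rewrite -esum_mkcond; apply: esum_excess_le => // x /ltW.
apply: le_trans (le_esum (fun x _ => pointwise x)) _.
rewrite esumD; last 2 first.
- by move=> x _; rewrite lee_fin mulr_ge0.
- by move=> x _; exact: excess0.
rewrite esumZl //; last by move=> x _; rewrite lee_fin.
by rewrite leeD2lE // fin_numM.
Qed.

End esum_lemmas.

Section distributions.
Variable R : realType.
Local Open Scope classical_set_scope.
Local Open Scope ereal_scope.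

Lemma distr_ge0 (X : Type) (mu : X -> R) x : is_distr mu -> (0 <= mu x)%R.
Proof. by move=> [mu01 _]; have /andP[] := mu01 x. Qed.

Lemma mass_ge0 (X : Type) (mu : X -> R) S :
  (forall x, 0 <= mu x)%R -> 0 <= mass mu S.
Proof. by move=> mu0; apply: esum_ge0 => x _; rewrite lee_fin. Qed.

Lemma mass_le1 (X : Type) (mu : X -> R) S : is_distr mu -> mass mu S <= 1.
Proof.
move=> mu_distr; have [_ [_ <-]] := mu_distr.
by apply: esum_le_setT => x; rewrite lee_fin (distr_ge0 _ mu_distr).
Qed.

Lemma mass_fin_num (X : Type) (mu : X -> R) S :
  is_distr mu -> mass mu S \is a fin_num.
Proof.
move=> mu_distr; rewrite ge0_fin_numE; last first.
  by apply: mass_ge0 => x; exact: distr_ge0.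
exact: le_lt_trans (mass_le1 _ mu_distr) (ltry _).
Qed.

Lemma kbindE (X Y : Type) (f : X -> Y -> R) (mu : X -> R) y :
  is_distr mu -> (forall x, is_distr (f x)) ->
  (kbind f mu y)%:E = esum [set: {classic X}] (fun x => (f x y * mu x)%:E).
Proof.
move=> mu_distr f_distr; rewrite /kbind fineK // ge0_fin_numE; last first.
  by apply: esum_ge0 => x _; rewrite lee_fin mulr_ge0 // distr_ge0.
have [mu01 [_ mu1]] := mu_distr.
apply: le_lt_trans (_ : _ <= mass mu setT) _; last first.
  by rewrite mu1 ltry.
apply: le_esum => x _; rewrite lee_fin ler_piMl ?distr_ge0 //.
by have [f01 _] := f_distr x; have /andP[] := f01 y.
Qed.

Lemma mass_kbind (X Y : Type) (f : X -> Y -> R) (mu : X -> R) S :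
  is_distr mu -> (forall x, is_distr (f x)) ->
  mass (kbind f mu) S =
  esum [set: {classic X}] (fun x => (mu x)%:E * mass (f x) S).
Proof.
move=> mu_distr f_distr; rewrite /mass.
under eq_esum do rewrite kbindE //.
rewrite esum_swap => [|y x]; last by rewrite lee_fin mulr_ge0 // distr_ge0.
apply: eq_esum => x _; rewrite -esumZl ?distr_ge0 // => [|y _]; last first.
  by rewrite lee_fin distr_ge0.
by apply: eq_esum => y _; rewrite -EFinM mulrC.
Qed.

End distributions.

Section dp_bound.
Variable R : realType.
Local Open Scope classical_set_scope.
Local Open Scope ereal_scope.

Lemma dp_bound_mono (eps delta eps' delta' : R) (X : Type) (mu nu : X -> R) :
  (eps <= eps')%R -> (delta <= delta')%R -> (forall x, 0 <= nu x)%R ->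
  dp_bound eps delta mu nu -> dp_bound eps' delta' mu nu.
Proof.
move=> le_eps le_delta nu0 mu_le S; apply: le_trans (mu_le S) _.
apply: leeD; last by rewrite lee_fin.
by apply: lee_wpmul2r; rewrite ?mass_ge0 // lee_fin ler_expR.
Qed.

Lemma dp_bound_kbind (X Y : Type) (eps delta eps' delta' : R)
    (f g : X -> Y -> R) (mu nu : X -> R) :
  (0 <= delta')%R ->
  (forall x, is_distr (f x)) -> (forall x, is_distr (g x)) ->
  (forall x, dp_bound eps' delta' (f x) (g x)) ->
  is_distr mu -> is_distr nu -> dp_bound eps delta mu nu ->
  dp_bound (eps + eps') (delta + delta') (kbind f mu) (kbind g nu).
Proof.
move=> delta'0 f_distr g_distr fg_le mu_distr nu_distr mu_le S.
rewrite !mass_kbind //.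
pose F x := fine (mass (f x) S); pose G x := fine (mass (g x) S).
have FE x : (F x)%:E = mass (f x) S by rewrite fineK ?mass_fin_num.
have GE x : (G x)%:E = mass (g x) S by rewrite fineK ?mass_fin_num.
have G0 x : (0 <= G x)%R by rewrite -lee_fin GE mass_ge0 // => y; exact: distr_ge0.
pose h x := (Num.min 1 (expR eps' * G x))%R.
have h01 x : (0 <= h x <= 1)%R.
  by rewrite /h le_min ge_min ler01 le_refl andbT mulr_ge0 ?expR_ge0.
have h0 x : (0 <= h x)%R by case/andP: (h01 x).
have F_le x : (F x <= h x + delta')%R.
  have F1 : (F x <= 1)%R by rewrite -lee_fin FE mass_le1.
  have FG : (F x <= expR eps' * G x + delta')%R.
    by rewrite -lee_fin EFinD EFinM FE GE fg_le.
  by rewrite -lerBlDr le_min; apply/andP; split; lra.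
have h_le x : (h x <= expR eps' * G x)%R by rewrite /h ge_min le_refl orbT.
have mu0 := distr_ge0 _ mu_distr; have nu0 := distr_ge0 _ nu_distr.
have avg_f_le : esum [set: {classic X}] (fun x => (mu x)%:E * mass (f x) S) <=
    esum [set: {classic X}] (fun x => (mu x * h x)%:E) + delta'%:E.
  have [_ [_ mu1]] := mu_distr.
  rewrite -[X in _ + X]mule1 -mu1 -esumZl //; last by move=> x _; rewrite lee_fin.
  rewrite -esumD; last 2 first.
  - by move=> x _; rewrite lee_fin mulr_ge0.
  - by move=> x _; rewrite lee_fin mulr_ge0.
  apply: le_esum => x _; rewrite -FE -!EFinM -EFinD lee_fin.
  by rewrite (mulrC delta') -mulrDr ler_wpM2l.
have avg_mu_h_le : esum [set: {classic X}] (fun x => (mu x * h x)%:E) <=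
    (expR eps)%:E * esum [set: {classic X}] (fun x => (nu x * h x)%:E) + delta%:E.
  by apply: esum_weighted_le => //; exact: mass_fin_num.
have avg_nu_h_le : esum [set: {classic X}] (fun x => (nu x * h x)%:E) <=
    (expR eps')%:E * esum [set: {classic X}] (fun x => (nu x)%:E * mass (g x) S).
  rewrite -esumZl ?expR_ge0 //; last first.
    by move=> x _; rewrite -GE -EFinM lee_fin mulr_ge0.
  by apply: le_esum => x _; rewrite -GE -!EFinM lee_fin mulrCA ler_wpM2l.
apply: le_trans avg_f_le _; rewrite EFinD addeA; apply: leeD => //.
apply: le_trans avg_mu_h_le _; apply: leeD => //.
by rewrite expRD EFinM -muleA; apply: lee_wpmul2l.
Qed.

End dp_bound.

Theorem proposition2 (R : realType) :
  (* monotonicity in the grade *)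
  (forall (eps delta eps' delta' : R) (X : Type) (mu nu : X -> R),
      0 <= eps -> 0 <= delta -> eps <= eps' -> delta <= delta' ->
      is_distr mu -> is_distr nu ->
      DPR eps delta mu nu -> DPR eps' delta' mu nu) /\
  (* graded x-parameterized assignment: Kleisli extension preserves relations *)
  (forall (X Y : Type) (eps delta eps' delta' : R)
          (f g : X -> Y -> R) (mu nu : X -> R),
      0 <= eps -> 0 <= delta -> 0 <= eps' -> 0 <= delta' ->
      (forall x, is_distr (f x)) -> (forall x, is_distr (g x)) ->
      (forall x, DPR eps' delta' (f x) (g x)) ->
      is_distr mu -> is_distr nu ->
      DPR eps delta mu nu ->
      DPR (eps + eps') (delta + delta') (kbind f mu) (kbind g nu)).
Proof.
split=> [eps delta eps' delta' X mu nu _ _ le_eps le_delta mu_distr nu_distr |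
         X Y eps delta eps' delta' f g mu nu _ _ _ delta'0 f_distr g_distr fg
         mu_distr nu_distr] /DPRE[mu_nu nu_mu]; apply/DPRE.
- split; apply: dp_bound_mono le_eps le_delta _ _ => // x; exact: distr_ge0.
- have f_g x : dp_bound eps' delta' (f x) (g x) by have /DPRE[] := fg x.
  have g_f x : dp_bound eps' delta' (g x) (f x) by have /DPRE[] := fg x.
  by split; apply: dp_bound_kbind.
Qed.
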